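(* Let $G=\{(1),(12)(34),(13)(24),(14)(23)\}\le S_4$, whose normalizer in $S_4$ is $S_4$. The homomorphism $S_4\to Aut_0(T_{4;G})$, $\nu\mapsto\hat\nu$, has kernel $G$ and image (the group of hidden symmetries) of order $6$, isomorphic to $S_3$. Writing $P_{ij}$ for the $G$-orbit of $(\{i,j\},\{k,l\})$ in $T_{(2^2)}$ and $Q_{ij}$ for the $G$-orbit of $(\{i,j\},\{k\},\{l\})$ in $T_{(2,1^2)}$ (where $\{i,j,k,l\}=\{1,2,3,4\}$; note $P_{ij}=P_{kl}$, $Q_{ij}=Q_{kl}$), one has: $\hat\nu(P_{ij})=P_{\nu(i)\nu(j)}$ and $\hat\nu(Q_{ij})=Q_{\nu(i)\nu(j)}$; in particular $\widehat{(13)}$ interchanges $P_{12}$ and $P_{14}$ and fixes $P_{13}$, and likewise interchanges $Q_{12}$ and $Q_{14}$ and fixes $Q_{13}$. Moreover, for each transposition $\nu$ the automorphism $\hat\nu$ acts on the six elements of $T_{(1^4);G}$ as a product of three disjoint transpositions, and for each $3$-cycle $\nu$ it acts on them as a product of two disjoint $3$-cycles.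
   Context: For a partition $\lambda=(\lambda_1\ge\dots\ge\lambda_k>0)$ of $4$, a tabloid of shape $\lambda$ is a sequence $A=(A_1,\dots,A_k)$ of pairwise disjoint subsets of $\{1,2,3,4\}$ with $|A_i|=\lambda_i$; $T_\lambda$ is their set. $S_4$ acts by $\zeta A=(\zeta(A_1),\dots,\zeta(A_k))$. Tabloids are partially ordered by $A\le B$ iff $A_1\cup\dots\cup A_i\subseteq B_1\cup\dots\cup B_i$ for all $i\ge1$ (missing rows empty); $T_{\lambda;G}$ is the set of $G$-orbits in $T_\lambda$, $T_{4;G}$ the set of all $G$-orbits of tabloids, ordered by $a\le b$ iff there are $A\in a$, $B\in b$ with $A\le B$. $Aut_0(T_{4;G})$ is the group of order-automorphisms of $T_{4;G}$ mapping each $T_{\mu;G}$ onto itself. For $\nu$ normalizing $G$, $\hat\nu$ is the map $O_G(A)\mapsto O_G(\nu A)$. *)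

(* Points {1,2,3,4} of the paper are 'I_4 = {0,1,2,3}
   (paper's k is our k-1). *)
From mathcomp Require Import all_boot all_fingroup.
Set Implicit Arguments. Unset Strict Implicit. Unset Printing Implicit Defensive.

(* A tabloid of 4 is stored as a 4-row function, rows beyond the length of
   the shape being empty ("missing rows empty"). *)
Definition tab := {ffun 'I_4 -> {set 'I_4}}.

Definition shape (A : tab) : seq nat := [seq #|A i| | i <- enum 'I_4].

(* lambda is a partition of 4, padded with zeros to length 4 *)
Definition partition4 (lam : seq nat) : bool :=
  [&& size lam == 4, sorted geq lam & sumn lam == 4].

Definition rows_disjoint (A : tab) : bool :=
  [forall i, forall j, (i != j) ==> [disjoint A i & A j]].

Definition Tshape (lam : seq nat) : {set tab} :=
  [set A : tab | (shape A == lam) && rows_disjoint A].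

Definition Tall : {set tab} :=
  [set A : tab | partition4 (shape A) && rows_disjoint A].

Definition tabact (z : 'S_4) (A : tab) : tab := [ffun i => z @: A i].

Definition leT (A B : tab) : bool :=
  [forall i : 'I_4, (\bigcup_(j : 'I_4 | j <= i) A j)
                      \subset (\bigcup_(j : 'I_4 | j <= i) B j)].

Section Orbits.
Variable G : {set 'S_4}.

Definition orbG (A : tab) : {set tab} := [set tabact g A | g in G].
Definition TshapeG (lam : seq nat) : {set {set tab}} :=
  [set orbG A | A in Tshape lam].
Definition TG : {set {set tab}} := [set orbG A | A in Tall].
Definition leO (a b : {set tab}) : bool :=
  [exists A in a, exists B in b, leT A B].

(* f (a map on T_{4;G}, extended arbitrarily off T_{4;G}) is in Aut_0(T_{4;G}) *)
Definition Aut0 (f : {set tab} -> {set tab}) : Prop :=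
  [/\ {in TG, forall X, f X \in TG},
      {in TG &, injective f},
      {in TG, forall Y, exists2 X, X \in TG & f X = Y},
      {in TG &, forall X Y, leO (f X) (f Y) = leO X Y} &
      forall lam, partition4 lam -> f @: TshapeG lam = TshapeG lam].

Definition hat (nu : 'S_4) : {ffun {set tab} -> {set tab}} :=
  [ffun X => if X \in TG then
               (if [pick A in X] is Some A then orbG (tabact nu A) else X)
             else X].
End Orbits.

Definition p0 : 'I_4 := inord 0.
Definition p1 : 'I_4 := inord 1.
Definition p2 : 'I_4 := inord 2.
Definition p3 : 'I_4 := inord 3.

Definition V4 : {set 'S_4} :=
  [set 1%g; (tperm p0 p1 * tperm p2 p3)%g; (tperm p0 p2 * tperm p1 p3)%g;
          (tperm p0 p3 * tperm p1 p2)%g].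

Definition tabP (i j : 'I_4) : tab :=
  [ffun r : 'I_4 => if r == p0 then [set i; j]
                    else if r == p1 then ~: [set i; j] else set0].
Definition tabQ (i j : 'I_4) : tab :=
  let C := ~: [set i; j] in
  let k := odflt i [pick x in C] in
  [ffun r : 'I_4 => if r == p0 then [set i; j]
                    else if r == p1 then [set k]
                    else if r == p2 then C :\ k else set0].

Definition P (i j : 'I_4) : {set tab} := orbG V4 (tabP i j).
Definition Q (i j : 'I_4) : {set tab} := orbG V4 (tabQ i j).

Definition hidden : {set {ffun {set tab} -> {set tab}}} :=
  [set hat V4 nu | nu : 'S_4].

From Pilot Require Import Defs.
From mathcomp Require Import all_boot all_fingroup.
Set Implicit Arguments. Unset Strict Implicit. Unset Printing Implicit Defensive.

(* V4 is normal in S_4 (it consists of 1 and the products of two disjoint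
   transpositions), so [hat nu] is well defined, and nu |-> [hat nu] is an action
   of S_4 by shape- and order-preserving bijections on the V4-orbits, in which
   V4 acts trivially.  The tabloid ({1},{2},{3},{4}) has trivial stabiliser, so
   [hat nu] fixes its orbit only if nu lies in V4: the kernel is V4.  As V4 acts
   regularly on the four points, S_4 is the product of V4 and the stabiliser S_3
   of a point; hence the image is a copy of S_3, and T_{(1^4);V4}, which is in
   bijection with the cosets of V4, has six elements, none of them fixed by a
   permutation outside V4. *)

Local Open Scope group_scope.
Implicit Types (g h nu mu : 'S_4) (i j k l : 'I_4) (A B : tab) (X Y : {set tab}).

Lemma p0E : p0 = Ordinal (isT : 0 < 4). Proof. by apply: val_inj; rewrite /= inordK. Qed.
Lemma p1E : p1 = Ordinal (isT : 1 < 4). Proof. by apply: val_inj; rewrite /= inordK. Qed.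
Lemma p2E : p2 = Ordinal (isT : 2 < 4). Proof. by apply: val_inj; rewrite /= inordK. Qed.
Lemma p3E : p3 = Ordinal (isT : 3 < 4). Proof. by apply: val_inj; rewrite /= inordK. Qed.
Definition pointsE := (p0E, p1E, p2E, p3E).

Lemma ord4P (x : 'I_4) : [\/ x = p0, x = p1, x = p2 | x = p3].
Proof.
rewrite !pointsE; case: x => [[|[|[|[|//]]]] lt_x4].
- by constructor 1; apply: val_inj.
- by constructor 2; apply: val_inj.
- by constructor 3; apply: val_inj.
- by constructor 4; apply: val_inj.
Qed.

Lemma points_neq : ((p1 == p0) = false) * ((p2 == p0) = false) * ((p3 == p0) = false)
  * ((p2 == p1) = false) * ((p3 == p1) = false) * ((p3 == p2) = false).
Proof. by rewrite !pointsE. Qed.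

Lemma enum_ord4 : enum 'I_4 = [:: p0; p1; p2; p3].
Proof. by apply: (inj_map val_inj); rewrite val_enum_ord !pointsE. Qed.

Lemma forall_ord4P (P : pred 'I_4) : reflect (forall x, P x) (all P [:: p0; p1; p2; p3]).
Proof.
apply: (iffP allP) => [allP x | allP x _]; last exact: allP.
by apply: allP; case: (ord4P x) => ->; rewrite !inE eqxx ?orbT.
Qed.

Lemma forall_ord4_4 (P : 'I_4 -> 'I_4 -> 'I_4 -> 'I_4 -> bool) :
  let ps := [:: p0; p1; p2; p3] in
  all (fun a => all (fun b => all (fun c => all (P a b c) ps) ps) ps) ps ->
  forall a b c d, P a b c d.
Proof.
by move=> ps /forall_ord4P H a; move/forall_ord4P: (H a) => {}H b;
  move/forall_ord4P: (H b) => {}H c; apply/forall_ord4P.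
Qed.

Lemma tpermE (T : finType) (x y z : T) :
  tperm x y z = if z == x then y else if z == y then x else z.
Proof. by case: tpermP => [->|->|/eqP/negbTE-> /eqP/negbTE->]; rewrite ?eqxx //; case: eqP. Qed.

Lemma uniq4E (T : eqType) (a b c d : T) : uniq [:: a; b; c; d] =
  [&& a != b, a != c, a != d, b != c, b != d & c != d].
Proof. by rewrite /= !inE !negb_or -!andbA andbT. Qed.

Lemma map_perm_uniq (T : finType) (s : {perm T}) (l : seq T) : uniq (map s l) = uniq l.
Proof. exact/map_inj_uniq/perm_inj. Qed.

Lemma card_setC2 (T : finType) (a b : T) : a != b -> #|~: [set a; b]| = (#|T| - 2)%N.
Proof. by move=> ab; rewrite -(cardsC [set a; b]) cards2 ab addKn. Qed.

Lemma card_setC3 (T : finType) (a b c : T) : uniq [:: a; b; c] ->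
  #|~: [set a; b; c]| = (#|T| - 3)%N.
Proof.
move=> /card_uniqP abc; have card3 : #|[set a; b; c]| = 3.
  by rewrite -[RHS]abc; apply: eq_card => x; rewrite !inE orbA.
by rewrite -(cardsC [set a; b; c]) card3 addKn.
Qed.

Lemma uniq_of_setT (i j k l : 'I_4) : [set i; j; k; l] = [set: 'I_4] -> uniq [:: i; j; k; l].
Proof.
move=> ijkl; apply/card_uniqP; rewrite [RHS]/= -[RHS](card_ord 4) -cardsT -ijkl.
by apply: eq_card => x; rewrite !inE !orbA.
Qed.

Lemma uniq_compl2 (i j : 'I_4) : i != j -> exists k l, uniq [:: i; j; k; l].
Proof.
move=> ij; have /cards2P [k [l [kl klE]]] : #|~: [set i; j]| == 2 by rewrite card_setC2 ?card_ord.
have : k \in ~: [set i; j] /\ l \in ~: [set i; j] by rewrite klE !inE !eqxx orbT.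
rewrite !inE !negb_or => -[/andP [ki kj] /andP [li lj]].
by exists k, l; rewrite uniq4E ij ![i == _]eq_sym ![j == _]eq_sym ki kj li lj kl.
Qed.

Lemma setC2_uniq (i j k l : 'I_4) : uniq [:: i; j; k; l] -> ~: [set i; j] = [set k; l].
Proof.
rewrite uniq4E => /and5P [ij ik il jk /andP [jl kl]].
apply/eqP; rewrite eq_sym eqEcard card_setC2 // card_ord cards2 kl andbT.
by apply/subsetP => x; rewrite !inE => /orP [] /eqP ->; rewrite negb_or 1?eq_sym ?ik 1?eq_sym ?jk
  1?eq_sym ?il 1?eq_sym ?jl.
Qed.

Lemma compl3_unique (a b c x y : 'I_4) : uniq [:: a; b; c] ->
  x \notin [set a; b; c] -> y \notin [set a; b; c] -> x = y.
Proof.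
move=> abc; have /cards1P [d dE] : #|~: [set a; b; c]| == 1%N by rewrite card_setC3 ?card_ord.
by rewrite -!in_setC dE !inE => /eqP -> /eqP ->.
Qed.

Definition graph4 (g : 'S_4) := (g p0, g p1, g p2, g p3).

Lemma graph4_inj : injective graph4.
Proof. by move=> g h [e0 e1 e2 e3]; apply/permP => x; case: (ord4P x) => ->. Qed.

Lemma mem_V4 g : (g \in V4) =
  (graph4 g \in [:: (p0, p1, p2, p3); (p1, p0, p3, p2); (p2, p3, p0, p1); (p3, p2, p1, p0)]).
Proof.
rewrite /V4 !inE -!orbA; apply/idP/idP.
  by case/or4P => /eqP ->; rewrite /graph4 ?permM ?perm1 ?tpermE !pointsE; vm_compute.
case/or4P => /eqP gE;
  [ have -> : g = 1 | have -> : g = tperm p0 p1 * tperm p2 p3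
  | have -> : g = tperm p0 p2 * tperm p1 p3 | have -> : g = tperm p0 p3 * tperm p1 p2 ];
  rewrite ?eqxx ?orbT //; apply: graph4_inj; rewrite gE /graph4 ?permM ?perm1 ?tpermE !pointsE;
  by apply/eqP; vm_compute.
Qed.

Lemma V4_group_set : group_set V4.
Proof.
apply/group_setP; split=> [|g h]; first by rewrite !inE eqxx.
rewrite !mem_V4 /graph4 !permM !inE.
by case/or4P => /eqP [-> -> -> ->]; case/or4P => /eqP [-> -> -> ->]; rewrite !pointsE; vm_compute.
Qed.

Canonical V4_group := group V4_group_set.

Lemma V4_involutive g : g \in V4 -> g * g = 1.
Proof.
rewrite mem_V4 !inE => gV4; apply: graph4_inj; rewrite /graph4 !permM !perm1.
by case/or4P: gV4 => /eqP [e0 e1 e2 e3]; rewrite ?e0 ?e1 ?e2 ?e3 ?e0 ?e1 ?e2 ?e3.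
Qed.

Lemma V4_free g x : g \in V4 -> g x = x -> g = 1.
Proof.
rewrite mem_V4 !inE; case/or4P => /eqP gE.
  by move=> _; apply: graph4_inj; rewrite gE /graph4 !perm1.
all: by case: gE => e0 e1 e2 e3; case: (ord4P x) => ->; rewrite ?e0 ?e1 ?e2 ?e3 !pointsE.
Qed.

Lemma V4_move_p3 y : exists2 g, g \in V4 & g p3 = y.
Proof.
case: (ord4P y) => ->;
  [ exists (tperm p0 p3 * tperm p1 p2) | exists (tperm p0 p2 * tperm p1 p3)
  | exists (tperm p0 p1 * tperm p2 p3) | exists 1 ];
  rewrite ?inE ?eqxx ?orbT ?permM ?perm1 ?tpermE ?pointsE //; by apply/eqP; vm_compute.
Qed.

Lemma tperm_pairs_in_V4 (a b c d : 'I_4) : uniq [:: a; b; c; d] ->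
  [/\ tperm a b * tperm c d \in V4, tperm a c * tperm b d \in V4
    & tperm a d * tperm b c \in V4].
Proof.
move: a b c d; suff pairsV4 a b c d : uniq [:: a; b; c; d] ==>
    [&& tperm a b * tperm c d \in V4, tperm a c * tperm b d \in V4 & tperm a d * tperm b c \in V4].
  by move=> a b c d abcd; apply/and3P; exact: implyP (pairsV4 a b c d) abcd.
rewrite !mem_V4 /graph4 !permM !tpermE; move: a b c d; apply: forall_ord4_4.
by rewrite !pointsE; vm_compute.
Qed.

Lemma tperm_pairsE (a b c d : 'I_4) : uniq [:: a; b; c; d] ->
  let s := tperm a b * tperm c d in [/\ s a = b, s b = a, s c = d & s d = c].
Proof.
move: a b c d; suff pairsE (a b c d : 'I_4) : uniq [:: a; b; c; d] ==>
    let s := tperm a b * tperm c d in [&& s a == b, s b == a, s c == d & s d == c].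
  by move=> a b c d /(implyP (pairsE a b c d)) /and4P [/eqP ? /eqP ? /eqP ? /eqP ?].
rewrite /= !permM !tpermE; move: a b c d; apply: forall_ord4_4.
by rewrite !pointsE; vm_compute.
Qed.

Lemma tperm_crossE (a b c d : 'I_4) : uniq [:: a; b; c; d] ->
  let s := tperm a c * tperm b d in [/\ s a = c, s b = d, s c = a & s d = b].
Proof.
move: a b c d; suff crossE (a b c d : 'I_4) : uniq [:: a; b; c; d] ==>
    let s := tperm a c * tperm b d in [&& s a == c, s b == d, s c == a & s d == b].
  by move=> a b c d /(implyP (crossE a b c d)) /and4P [/eqP ? /eqP ? /eqP ? /eqP ?].
rewrite /= !permM !tpermE; move: a b c d; apply: forall_ord4_4.
by rewrite !pointsE; vm_compute.
Qed.

Lemma normV4 : 'N(V4) = [set: 'S_4].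
Proof.
apply/setP => x; rewrite inE in_setT; apply/subsetP => _ /imsetP [g gV4 ->].
have ux : uniq [:: x p0; x p1; x p2; x p3].
  by rewrite -[_ :: _]/(map x [:: p0; p1; p2; p3]) map_perm_uniq !pointsE.
have [V4x1 V4x2 V4x3] := tperm_pairs_in_V4 ux.
rewrite /V4 !inE -!orbA in gV4.
by case/or4P: gV4 => /eqP ->; rewrite ?conj1g ?group1 // conjMg !tpermJ.
Qed.

Lemma in_normV4 nu : nu \in 'N(V4).
Proof. by rewrite normV4 inE. Qed.

Lemma tperm_notin_V4 (a b : 'I_4) : a != b -> tperm a b \notin V4.
Proof.
move=> ab; apply/negP => /V4_free t1.
have /set0Pn [c] : ~: [set a; b] != set0 by rewrite -card_gt0 card_setC2 ?card_ord.
rewrite !inE negb_or => /andP [ca cb].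
have /t1 t_eq1 : tperm a b c = c by rewrite tpermD // eq_sym.
by move: ab; rewrite -[b](tpermL a b) t_eq1 perm1 eqxx.
Qed.

Lemma three_cycle_notin_V4 (nu : 'S_4) (a b c : 'I_4) : c != a -> nu a = b -> nu b = c -> nu \notin V4.
Proof.
move=> ca ea eb; apply/negP => /V4_involutive nu2.
by move: ca; rewrite -(perm1 a) -nu2 permM ea eb eqxx.
Qed.

Lemma three_cycle_cube (nu : 'S_4) (a b c : 'I_4) : uniq [:: a; b; c] ->
  nu a = b -> nu b = c -> nu c = a -> nu * nu * nu = 1.
Proof.
move=> abc ea eb ec; set nu3 := nu * nu * nu.
have fix3 y : y \in [set a; b; c] -> nu3 y = y.
  by rewrite !inE -orbA => /or3P [] /eqP ->; rewrite !permM ?ea ?eb ?ec ?ea ?eb ?ec ?ea ?eb.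
apply/permP => x; rewrite perm1; have [/fix3 // | x_out] := boolP (x \in [set a; b; c]).
apply: (compl3_unique abc _ x_out); apply: contra x_out => nu3x_in.
by rewrite -(perm_inj (fix3 _ nu3x_in)).
Qed.

(* S_3 as the stabiliser of p3 in S_4: a complement of V4. *)
Definition ext3 (x : 'S_3) : 'S_4 := lift_perm p3 p3 x.

Lemma ext3M (x y : 'S_3) : ext3 (x * y) = ext3 x * ext3 y.
Proof. by rewrite /ext3 lift_permM. Qed.

Lemma ext3_p3 (x : 'S_3) : ext3 x p3 = p3.
Proof. exact: lift_perm_id. Qed.

Lemma ext3_inj : injective ext3.
Proof.
move=> x y xy; apply/permP => m; apply: (@lift_inj _ p3).
by rewrite -(lift_perm_lift p3 p3 x) -(lift_perm_lift p3 p3 y) -/(ext3 x) -/(ext3 y) xy.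
Qed.

Lemma ext3_onto (h : 'S_4) : h p3 = p3 -> exists x, h = ext3 x.
Proof.
move=> hp3; have lift_out m : p3 != h (lift p3 m) by rewrite -{1}hp3 (inj_eq perm_inj) neq_lift.
pose f m := odflt m (unlift p3 (h (lift p3 m))).
have fE m : lift p3 (f m) = h (lift p3 m).
  by rewrite /f; case: unliftP (lift_out m) => [j _ // | ->]; rewrite eqxx.
have f_inj : injective f.
  by move=> m1 m2 fm; apply: (@lift_inj _ p3); apply: (@perm_inj _ h); rewrite -!fE fm.
exists (perm f_inj); apply/permP => i; rewrite /ext3.
by case: (unliftP p3 i) => [j -> | ->]; rewrite ?lift_perm_lift ?lift_perm_id ?permE ?fE.
Qed.

Lemma S4_ext3_V4 (nu : 'S_4) : exists x, exists2 g, g \in V4 & nu = ext3 x * g.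
Proof.
have [g gV4 gp3] := V4_move_p3 (nu p3).
have [x nugE] : exists x, nu * g^-1 = ext3 x by apply: ext3_onto; rewrite permM -gp3 permK.
by exists x, g; rewrite // -nugE mulgKV.
Qed.

Lemma tabact1 A : tabact 1 A = A.
Proof. by apply/ffunP => i; rewrite ffunE imset_perm1. Qed.

Lemma tabactM g h A : tabact (g * h) A = tabact h (tabact g A).
Proof. by apply/ffunP => i; rewrite !ffunE -imset_comp; apply: eq_imset => x; rewrite permM. Qed.

Lemma tabactK g : cancel (tabact g) (tabact g^-1).
Proof. by move=> A; rewrite -tabactM mulgV tabact1. Qed.

Lemma tabactKV g : cancel (tabact g^-1) (tabact g).
Proof. by move=> A; rewrite -tabactM mulVg tabact1. Qed.

Definition tab_action : {action 'S_4 &-> tab} :=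
  TotalAction (to := fun A g => tabact g A) tabact1 (fun A g h => tabactM g h A).

Lemma orbG_orbit (G : {set 'S_4}) A : orbG G A = orbit tab_action G A.
Proof. by []. Qed.

Lemma shapeE A : Defs.shape A = [:: #|A p0|; #|A p1|; #|A p2|; #|A p3|].
Proof. by rewrite /Defs.shape enum_ord4. Qed.

Lemma shape_tabact g A : Defs.shape (tabact g A) = Defs.shape A.
Proof. by apply: eq_map => i; rewrite ffunE card_imset //; exact: perm_inj. Qed.

Lemma rows_disjoint4 A :
  [disjoint A p0 & A p1] -> [disjoint A p0 & A p2] -> [disjoint A p0 & A p3] ->
  [disjoint A p1 & A p2] -> [disjoint A p1 & A p3] -> [disjoint A p2 & A p3] ->
  rows_disjoint A.
Proof.
move=> d01 d02 d03 d12 d13 d23; apply/forallP => i; apply/forallP => j; apply/implyP.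
by case: (ord4P i) => ->; case: (ord4P j) => ->; rewrite ?eqxx // => _; rewrite disjoint_sym.
Qed.

Lemma rows_disjoint_tabact g A : rows_disjoint (tabact g A) = rows_disjoint A.
Proof.
by apply: eq_forallb => i; apply: eq_forallb => j; rewrite !ffunE (imset_disjoint perm_inj).
Qed.

Lemma Tall_tabact g A : (tabact g A \in Tall) = (A \in Tall).
Proof. by rewrite !inE shape_tabact rows_disjoint_tabact. Qed.

Lemma Tshape_tabact g lam A : (tabact g A \in Tshape lam) = (A \in Tshape lam).
Proof. by rewrite !inE shape_tabact rows_disjoint_tabact. Qed.

Lemma Tshape_Tall lam A : partition4 lam -> A \in Tshape lam -> A \in Tall.
Proof. by move=> lam4; rewrite !inE => /andP [/eqP -> ->]; rewrite lam4. Qed.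

Lemma leT_tabact_mono g A B : leT A B -> leT (tabact g A) (tabact g B).
Proof.
move/forallP => AB; apply/forallP => i; apply/subsetP => y /bigcupP [j ji].
rewrite ffunE => /imsetP [x Ajx ->].
have /(subsetP (AB i)) /bigcupP [k ki Bkx] : x \in \bigcup_(j : 'I_4 | j <= i) A j.
  by apply/bigcupP; exists j.
by apply/bigcupP; exists k; rewrite // ffunE imset_f.
Qed.

Lemma leT_tabact g A B : leT (tabact g A) (tabact g B) = leT A B.
Proof.
apply/idP/idP; last exact: leT_tabact_mono.
by move/(leT_tabact_mono g^-1); rewrite !tabactK.
Qed.

Section Hat.

Variable G : {group 'S_4}.

Lemma orbG_refl A : A \in orbG G A.
Proof. by rewrite orbG_orbit orbit_refl. Qed.

Lemma orbG_tabact_eq g A : g \in G -> orbG G (tabact g A) = orbG G A.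
Proof. by move=> Gg; rewrite !orbG_orbit; apply/orbit_eqP/(mem_orbit tab_action). Qed.

Lemma orbG_tabact nu A B : nu \in 'N(G) ->
  B \in orbG G A -> orbG G (tabact nu B) = orbG G (tabact nu A).
Proof.
move=> nGnu /imsetP [g Gg ->]; rewrite -tabactM conjgC tabactM orbG_tabact_eq //.
by rewrite memJ_norm.
Qed.

Lemma leO_tabact_mono nu A B : nu \in 'N(G) ->
  leO (orbG G A) (orbG G B) -> leO (orbG G (tabact nu A)) (orbG G (tabact nu B)).
Proof.
move=> nGnu /existsP [A' /andP [AA' /existsP [B' /andP [BB' leAB']]]].
apply/existsP; exists (tabact nu A'); rewrite -(orbG_tabact nGnu AA') orbG_refl /=.
by apply/existsP; exists (tabact nu B'); rewrite -(orbG_tabact nGnu BB') orbG_refl leT_tabact.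
Qed.

Lemma leO_tabact nu A B : nu \in 'N(G) ->
  leO (orbG G (tabact nu A)) (orbG G (tabact nu B)) = leO (orbG G A) (orbG G B).
Proof.
move=> nGnu; apply/idP/idP; last exact: leO_tabact_mono.
by move/(leO_tabact_mono (groupVr nGnu)); rewrite !tabactK.
Qed.

Lemma hatE nu A : nu \in 'N(G) -> A \in Tall -> hat G nu (orbG G A) = orbG G (tabact nu A).
Proof.
move=> nGnu TA; rewrite /hat ffunE imset_f //.
by case: pickP => [B /(orbG_tabact nGnu) // | /(_ A)]; rewrite orbG_refl.
Qed.

Lemma hat_notTG nu X : X \notin TG G -> hat G nu X = X.
Proof. by rewrite /hat ffunE => /negbTE ->. Qed.

Lemma hat_TG nu X : nu \in 'N(G) -> X \in TG G -> hat G nu X \in TG G.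
Proof. by move=> nGnu /imsetP [A TA ->]; rewrite hatE // imset_f // Tall_tabact. Qed.

Lemma hat_comp nu mu X : nu \in 'N(G) -> mu \in 'N(G) ->
  hat G (nu * mu) X = hat G mu (hat G nu X).
Proof.
move=> nGnu nGmu; have [/imsetP [A TA ->] | TGX] := boolP (X \in TG G); last by rewrite !hat_notTG.
by rewrite !hatE ?groupM ?Tall_tabact // tabactM.
Qed.

Lemma hat_id g X : g \in G -> hat G g X = X.
Proof.
move=> Gg; have [/imsetP [A TA ->] | TGX] := boolP (X \in TG G); last by rewrite hat_notTG.
by rewrite hatE ?orbG_tabact_eq // (subsetP (normG G)).
Qed.

Lemma hatK nu : nu \in 'N(G) -> cancel (hat G nu) (hat G nu^-1).
Proof. by move=> nGnu X; rewrite -hat_comp ?groupV // mulgV hat_id. Qed.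

Lemma hatKV nu : nu \in 'N(G) -> cancel (hat G nu^-1) (hat G nu).
Proof. by move=> nGnu X; rewrite -{1}[nu]invgK hatK ?groupV. Qed.

Lemma hat_TshapeG nu lam : nu \in 'N(G) -> partition4 lam ->
  hat G nu @: TshapeG G lam = TshapeG G lam.
Proof.
move=> nGnu lam4; apply/setP => X; apply/imsetP/imsetP => [[_ /imsetP [A TA ->] ->] | [A TA ->]].
  by exists (tabact nu A); rewrite ?Tshape_tabact ?hatE ?(Tshape_Tall lam4 TA).
exists (orbG G (tabact nu^-1 A)); first by rewrite imset_f ?Tshape_tabact.
by rewrite hatE ?tabactKV ?Tall_tabact ?(Tshape_Tall lam4 TA).
Qed.

Lemma Aut0_hat nu : nu \in 'N(G) -> Aut0 G (hat G nu).
Proof.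
move=> nGnu; split=> [X | X Y _ _ | Y TGY | X Y | lam]; first exact: hat_TG.
- by move=> XY; rewrite -(hatK nGnu X) XY hatK.
- by exists (hat G nu^-1 Y); rewrite ?hat_TG ?groupV ?hatKV.
- by case/imsetP => A TA -> /imsetP [B TB ->]; rewrite !hatE // leO_tabact.
- exact: hat_TshapeG.
Qed.

End Hat.

Definition tab_pts : tab := [ffun r => [set r]].

Lemma tabact_pts g : tabact g tab_pts = [ffun r => [set g r]].
Proof. by apply/ffunP => r; rewrite !ffunE imset_set1. Qed.

Lemma tabact_pts_inj : injective (tabact^~ tab_pts).
Proof.
move=> g h /= /ffunP gh; apply/permP => r.
by apply/set1_inj; have := gh r; rewrite !tabact_pts !ffunE.
Qed.

Lemma tab_pts_Tshape : tab_pts \in Tshape [:: 1; 1; 1; 1]%N.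
Proof.
rewrite inE shapeE !ffunE !cards1 eqxx; apply/forallP => i; apply/forallP => j.
by apply/implyP => ij; rewrite !ffunE disjoints1 inE.
Qed.

Lemma tab_pts_Tall : tab_pts \in Tall.
Proof. exact: Tshape_Tall tab_pts_Tshape. Qed.

Lemma Tshape_pts A : A \in Tshape [:: 1; 1; 1; 1]%N -> exists s, A = tabact s tab_pts.
Proof.
rewrite inE shapeE => /andP [/eqP [c0 c1 c2 c3] disjA].
have /all_sig [f fE] : forall i, {x | A i == [set x]}.
  move=> i; apply: sigW; have /cards1P [x ->] : #|A i| == 1%N by case: (ord4P i) => ->; apply/eqP.
  by exists x.
have {}fE i : A i = [set f i] by apply/eqP.
have f_inj : injective f.
  move=> i j fij; apply/eqP; apply: contraTT disjA => ij; apply/forallPn; exists i.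
  by apply/forallPn; exists j; rewrite ij /= !fE fij disjoints1 inE eqxx.
by exists (perm f_inj); apply/ffunP => r; rewrite tabact_pts !ffunE permE fE.
Qed.

Lemma orbG_pts_eq (G : {group 'S_4}) s t :
  orbG G (tabact s tab_pts) = orbG G (tabact t tab_pts) -> s^-1 * t \in G.
Proof.
move=> st; have /imsetP [g Gg] : tabact t tab_pts \in orbG G (tabact s tab_pts).
  by rewrite st orbG_refl.
by rewrite -tabactM => /tabact_pts_inj ->; rewrite mulKg.
Qed.

Lemma kernel_hat_V4 : [set nu : 'S_4 | [forall X in TG V4, hat V4 nu X == X]] = V4.
Proof.
apply/setP => nu; rewrite inE; apply/forallP/idP => [fix_nu | V4nu X]; last first.
  by rewrite hat_id // eqxx implybT.
have := fix_nu (orbG V4 tab_pts); rewrite imset_f ?tab_pts_Tall //=.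
rewrite hatE ?in_normV4 ?tab_pts_Tall // -{2}(tabact1 tab_pts) => /eqP /orbG_pts_eq.
by rewrite mulg1 groupV.
Qed.

Lemma ext3_V4 x y : (ext3 x)^-1 * ext3 y \in V4 -> x = y.
Proof.
move=> V4xy; have : ((ext3 x)^-1 * ext3 y) p3 = p3.
  by rewrite permM -{1}(ext3_p3 x) permK ext3_p3.
move/(V4_free V4xy) => xy1; apply: ext3_inj.
by rewrite -[ext3 y](mulKVg (ext3 x)) xy1 mulg1.
Qed.

Definition hat3 x := hat V4 (ext3 x).

Lemma hat3_inj : injective hat3.
Proof.
move=> x y /ffunP /(_ (orbG V4 tab_pts)).
by rewrite /hat3 !hatE ?in_normV4 ?tab_pts_Tall // => /orbG_pts_eq /ext3_V4.
Qed.

Lemma hat3M x y : hat3 (x * y) = [ffun X => hat3 y (hat3 x X)].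
Proof. by apply/ffunP => X; rewrite [RHS]ffunE /hat3 ext3M hat_comp ?in_normV4. Qed.

Lemma hat3_onto : [set hat3 x | x : 'S_3] = hidden.
Proof.
apply/setP => f; apply/imsetP/imsetP => [[x _ ->] | [nu _ ->]]; first by exists (ext3 x).
have [x [g V4g ->]] := S4_ext3_V4 nu; exists x => //.
by apply/ffunP => X; rewrite hat_comp ?in_normV4 // hat_id.
Qed.

Lemma card_hidden : #|hidden| = 6.
Proof. by rewrite -hat3_onto card_imset ?cardsT ?card_Sn //; exact: hat3_inj. Qed.

Lemma TshapeG_ones :
  TshapeG V4 [:: 1; 1; 1; 1]%N = [set orbG V4 (tabact (ext3 x) tab_pts) | x : 'S_3].
Proof.
apply/setP => X; apply/imsetP/imsetP => [[_ /Tshape_pts [s ->] ->] | [x _ ->]].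
  have [x [g V4g ->]] := S4_ext3_V4 s.
  by exists x; rewrite // tabactM orbG_tabact_eq.
by exists (tabact (ext3 x) tab_pts); rewrite ?Tshape_tabact ?tab_pts_Tshape.
Qed.

Lemma card_TshapeG_ones : #|TshapeG V4 [:: 1; 1; 1; 1]%N| = 6.
Proof.
rewrite TshapeG_ones card_imset ?cardsT ?card_Sn //.
by move=> x y /orbG_pts_eq /ext3_V4.
Qed.

Lemma hat_moves_TshapeG_ones nu X : nu \notin V4 ->
  X \in TshapeG V4 [:: 1; 1; 1; 1]%N -> hat V4 nu X != X.
Proof.
move=> V4'nu /imsetP [_ /Tshape_pts [s ->] ->].
rewrite hatE ?in_normV4 ?Tall_tabact ?tab_pts_Tall // -tabactM.
by apply: contra V4'nu => /eqP /esym /orbG_pts_eq; rewrite mulKg.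
Qed.

Lemma hat_tperm_TshapeG_ones (a b : 'I_4) : a != b ->
  {in TshapeG V4 [:: 1; 1; 1; 1]%N, forall X,
     hat V4 (tperm a b) X != X /\ hat V4 (tperm a b) (hat V4 (tperm a b) X) = X}.
Proof.
move=> ab X T1X; split; first exact: hat_moves_TshapeG_ones (tperm_notin_V4 ab) T1X.
by rewrite -hat_comp ?in_normV4 // tperm2 hat_id.
Qed.

Lemma hat_3cycle_TshapeG_ones nu (a b c : 'I_4) : uniq [:: a; b; c] ->
  nu a = b -> nu b = c -> nu c = a ->
  {in TshapeG V4 [:: 1; 1; 1; 1]%N, forall X,
     hat V4 nu X != X /\ hat V4 nu (hat V4 nu (hat V4 nu X)) = X}.
Proof.
move=> abc ea eb ec X T1X; split.
  apply: hat_moves_TshapeG_ones T1X; apply: three_cycle_notin_V4 ea eb.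
  by apply: contraTneq abc => ->; rewrite /= !inE eqxx orbT.
by rewrite -!hat_comp ?in_normV4 // mulgA (three_cycle_cube abc ea eb ec) hat_id.
Qed.

Lemma imset_permC (T : finType) (s : {perm T}) (S : {set T}) : s @: (~: S) = ~: (s @: S).
Proof. by apply/setP => x; rewrite -(permKV s x) !inE !(mem_imset _ _ perm_inj) inE. Qed.

Lemma tabP_tabact nu i j : tabact nu (tabP i j) = tabP (nu i) (nu j).
Proof.
apply/ffunP => r; rewrite !ffunE; case: ifP => _; first by rewrite imsetU1 imset_set1.
by case: ifP => _; rewrite ?imset0 // imset_permC imsetU1 imset_set1.
Qed.

Lemma tabP_sym i j : tabP i j = tabP j i.
Proof. by rewrite /tabP setUC. Qed.

Lemma tabP_Tall i j : i != j -> tabP i j \in Tall.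
Proof.
move=> ij; rewrite inE shapeE !ffunE !eqxx !points_neq cards2 ij card_setC2 // card_ord cards0 /=.
by apply: rows_disjoint4; rewrite !ffunE ?eqxx ?points_neq -setI_eq0 ?setICr ?setI0 ?set0I.
Qed.

Definition tab211 (a b c d : 'I_4) : tab :=
  [ffun r => if r == p0 then [set a; b] else if r == p1 then [set c]
             else if r == p2 then [set d] else set0].

Lemma tab211_tabact nu a b c d :
  tabact nu (tab211 a b c d) = tab211 (nu a) (nu b) (nu c) (nu d).
Proof. by apply/ffunP => r; rewrite !ffunE; do ?case: ifP => _; rewrite ?imsetU1 ?imset_set1 ?imset0. Qed.

Lemma tab211_sym a b c d : tab211 a b c d = tab211 b a c d.
Proof. by rewrite /tab211 setUC. Qed.

Lemma tab211_Tall a b c d : uniq [:: a; b; c; d] -> tab211 a b c d \in Tall.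
Proof.
rewrite uniq4E => /and5P [ab ac ad bc /andP [bd cd]].
rewrite inE shapeE !ffunE !eqxx !points_neq cards2 ab !cards1 cards0 /=.
apply: rows_disjoint4; rewrite !ffunE ?eqxx ?points_neq -setI_eq0 ?setI0 // setI_eq0;
  by rewrite disjoint_sym disjoints1 !inE ?negb_or ?(eq_sym c) ?(eq_sym d) ?ac ?ad ?bc ?bd.
Qed.

Lemma tabQ_tab211 i j k l : uniq [:: i; j; k; l] ->
  tabQ i j = tab211 i j k l \/ tabQ i j = tab211 i j l k.
Proof.
move=> ijkl; have kl : k != l by move: ijkl; rewrite uniq4E => /and5P [_ _ _ _ /andP []].
rewrite /tabQ (setC2_uniq ijkl); case: pickP => [x | /(_ k)]; last by rewrite !inE eqxx.
case/set2P => ->; [left | right]; apply/ffunP => r; rewrite !ffunE /=;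
  do 3?case: ifP => _ //.
  by rewrite setU1K // inE.
by rewrite setUC setU1K // inE eq_sym.
Qed.

Lemma Q_tab211 i j k l : uniq [:: i; j; k; l] -> Q i j = orbG V4 (tab211 i j k l).
Proof.
move=> ijkl; have [V4s _ _] := tperm_pairs_in_V4 ijkl; have [si sj sk sl] := tperm_pairsE ijkl.
rewrite /Q; case: (tabQ_tab211 ijkl) => -> //.
by rewrite -(orbG_tabact_eq _ V4s) tab211_tabact si sj sk sl tab211_sym.
Qed.

Lemma P_compl i j k l : uniq [:: i; j; k; l] -> P i j = P k l.
Proof.
move=> ijkl; have [_ V4s _] := tperm_pairs_in_V4 ijkl; have [si sj _ _] := tperm_crossE ijkl.
by rewrite /P -(orbG_tabact_eq _ V4s) tabP_tabact si sj.
Qed.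

Lemma Q_compl i j k l : uniq [:: i; j; k; l] -> Q i j = Q k l.
Proof.
move=> ijkl; have [_ V4s _] := tperm_pairs_in_V4 ijkl; have [si sj sk sl] := tperm_crossE ijkl.
have klij : uniq [:: k; l; i; j] by rewrite -(rot_uniq 2).
by rewrite (Q_tab211 ijkl) (Q_tab211 klij) -(orbG_tabact_eq _ V4s) tab211_tabact si sj sk sl.
Qed.

Lemma P_sym i j : P i j = P j i.
Proof. by rewrite /P tabP_sym. Qed.

Lemma Q_sym i j : i != j -> Q i j = Q j i.
Proof.
move=> ij; have [k [l ijkl]] := uniq_compl2 ij.
have jikl : uniq [:: j; i; k; l].
  by move: ijkl; rewrite !uniq4E eq_sym => /and5P [-> -> -> -> /andP [-> ->]].
by rewrite (Q_tab211 ijkl) (Q_tab211 jikl) tab211_sym.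
Qed.

Lemma hatP nu i j : i != j -> hat V4 nu (P i j) = P (nu i) (nu j).
Proof. by move=> ij; rewrite /P hatE ?in_normV4 ?tabP_Tall // tabP_tabact. Qed.

Lemma hatQ nu i j : i != j -> hat V4 nu (Q i j) = Q (nu i) (nu j).
Proof.
move=> ij; have [k [l ijkl]] := uniq_compl2 ij.
have nu_ijkl : uniq [:: nu i; nu j; nu k; nu l].
  by rewrite -[_ :: _]/(map nu [:: i; j; k; l]) map_perm_uniq.
by rewrite (Q_tab211 ijkl) (Q_tab211 nu_ijkl) hatE ?in_normV4 ?tab211_Tall // tab211_tabact.
Qed.

Local Close Scope group_scope.

Theorem proposition10p1p2 :
  (* the normalizer of G in S_4 is S_4 *)
  'N(V4)%g = [set: 'S_4] /\
  (* nu-hat is well defined on G-orbits and is the map O_G(A) |-> O_G(nu A) *)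
  (forall (nu : 'S_4) (A B : tab), A \in Tall -> B \in orbG V4 A ->
       orbG V4 (tabact nu B) = orbG V4 (tabact nu A)) /\
  (forall (nu : 'S_4) (A : tab), A \in Tall ->
       hat V4 nu (orbG V4 A) = orbG V4 (tabact nu A)) /\
  (* nu |-> nu-hat is a homomorphism S_4 -> Aut_0(T_{4;G}) *)
  (forall nu : 'S_4, Aut0 V4 (hat V4 nu)) /\
  (forall nu mu : 'S_4, hat V4 (nu * mu)%g = [ffun X => hat V4 mu (hat V4 nu X)]) /\
  (* its kernel is G *)
  [set nu : 'S_4 | [forall X in TG V4, hat V4 nu X == X]] = V4 /\
  (* its image has order 6 and is isomorphic to S_3 *)
  #|hidden| = 6 /\
  (exists phi : 'S_3 -> {ffun {set tab} -> {set tab}},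
      [/\ injective phi,
          forall x y : 'S_3, phi (x * y)%g = [ffun X => phi y (phi x X)] &
          [set phi x | x : 'S_3] = hidden]) /\
  (* P_ij = P_kl, Q_ij = Q_kl *)
  (forall i j k l : 'I_4, [set i; j; k; l] = [set: 'I_4] ->
       P i j = P k l /\ Q i j = Q k l) /\
  (* nu-hat(P_ij) = P_{nu(i)nu(j)}, nu-hat(Q_ij) = Q_{nu(i)nu(j)} *)
  (forall (nu : 'S_4) (i j : 'I_4), i != j ->
       hat V4 nu (P i j) = P (nu i) (nu j) /\ hat V4 nu (Q i j) = Q (nu i) (nu j)) /\
  (* (13)-hat swaps P_12, P_14, fixes P_13; likewise for Q *)
  (let t := tperm p0 p2 in
   [/\ hat V4 t (P p0 p1) = P p0 p3, hat V4 t (P p0 p3) = P p0 p1 &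
       hat V4 t (P p0 p2) = P p0 p2] /\
   [/\ hat V4 t (Q p0 p1) = Q p0 p3, hat V4 t (Q p0 p3) = Q p0 p1 &
       hat V4 t (Q p0 p2) = Q p0 p2]) /\
  (* T_{(1^4);G} has six elements *)
  #|TshapeG V4 [:: 1; 1; 1; 1]| = 6 /\
  (* a transposition acts on it as a product of three disjoint transpositions *)
  (forall a b : 'I_4, a != b ->
     {in TshapeG V4 [:: 1; 1; 1; 1], forall X,
        hat V4 (tperm a b) X != X /\ hat V4 (tperm a b) (hat V4 (tperm a b) X) = X}) /\
  (* a 3-cycle acts on it as a product of two disjoint 3-cycles *)
  (forall (nu : 'S_4) (a b c : 'I_4), [&& a != b, b != c & a != c] ->
     nu a = b -> nu b = c -> nu c = a ->
     {in TshapeG V4 [:: 1; 1; 1; 1], forall X,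
        hat V4 nu X != X /\ hat V4 nu (hat V4 nu (hat V4 nu X)) = X}).
Proof.
split; first exact: normV4.
split; first by move=> nu A B _; apply: orbG_tabact (in_normV4 nu).
split; first by move=> nu A; apply: hatE (in_normV4 nu).
split; first by move=> nu; apply: Aut0_hat (in_normV4 nu).
split; first by move=> nu mu; apply/ffunP => X; rewrite [RHS]ffunE hat_comp ?in_normV4.
split; first exact: kernel_hat_V4.
split; first exact: card_hidden.
split; first by exists hat3; split; [exact: hat3_inj | exact: hat3M | exact: hat3_onto].
split; first by move=> i j k l /uniq_of_setT ijkl; split; [exact: P_compl | exact: Q_compl].
split; first by move=> nu i j ij; split; [exact: hatP | exact: hatQ].
split.
  have [t0 t1 t2 t3] : [/\ tperm p0 p2 p0 = p2, tperm p0 p2 p1 = p1, tperm p0 p2 p2 = p0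
    & tperm p0 p2 p3 = p3] by rewrite !tpermE !pointsE.
  have [n01 n02 n03] : [/\ p0 != p1, p0 != p2 & p0 != p3] by rewrite !pointsE.
  have [u1 u3] : uniq [:: p2; p1; p0; p3] /\ uniq [:: p2; p3; p0; p1] by rewrite !pointsE.
  rewrite /= !hatP ?hatQ // t0 t1 t2 t3 (P_sym p2 p0) -(Q_sym n02).
  by rewrite (P_compl u1) (P_compl u3) (Q_compl u1) (Q_compl u3).
split; first exact: card_TshapeG_ones.
split; first exact: hat_tperm_TshapeG_ones.
by move=> nu a b c /and3P [ab bc ac]; apply: hat_3cycle_TshapeG_ones; rewrite /= !inE negb_or ab ac bc.
Qed.
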